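(* Let $(\mathbf{x}^1,y_l^1,y_r^1),\dots,(\mathbf{x}^T,y_l^T,y_r^T)$ be a sequence of examples with $\mathbf{x}^t\in\mathbb{R}^d$ and integers $1\le y_l^t\le y_r^t\le K$, presented to the PA algorithm started from $\mathbf{w}^1=\mathbf{0}$, $\boldsymbol\theta^1=\mathbf{0}$. Let $\mathbf{v}^*=(\mathbf{u}^*,\mathbf{b}^* )$, $\mathbf{u}^*\in\mathbb{R}^d$, $\mathbf{b}^*\in\mathbb{R}^{K-1}$, be an ideal classifier: $\mathbf{u}^*\cdot\mathbf{x}^t-b_i^*\ge1$ for all $i\in\{1,\dots,y_l^t-1\}$ and all $t\in[T]$, and $\mathbf{u}^*\cdot\mathbf{x}^t-b_i^*\le-1$ for all $i\in\{y_r^t,\dots,K-1\}$ and all $t\in[T]$. Let $c=\min_{t\in[T]}(y_r^t-y_l^t)$ and $R^2=\max_{t\in[T]}\Vert\mathbf{x}^t\Vert^2$. Then $$\sum_{t=1}^T\sum_{i=1}^{K-1}(l_i^t)^2\le\Vert\mathbf{v}^*\Vert^2\left(1+R^2(K-c-1)\right),$$ where $\Vert\mathbf{v}^*\Vert^2=\Vert\mathbf{u}^*\Vert^2+\Vert\mathbf{b}^*\Vert^2$.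
   Context: PA algorithm: at trial $t$, $(\mathbf{w}^{t+1},\boldsymbol\theta^{t+1})$ is the unique minimizer of $\tfrac12\Vert\mathbf{w}-\mathbf{w}^t\Vert^2+\tfrac12\Vert\boldsymbol\theta-\boldsymbol\theta^t\Vert^2$ subject to $\mathbf{w}\cdot\mathbf{x}^t-\theta_i\ge1$ for $i=1,\dots,y_l^t-1$ and $\mathbf{w}\cdot\mathbf{x}^t-\theta_i\le-1$ for $i=y_r^t,\dots,K-1$. Losses: $l_i^t=\max(0,1+\theta_i^t-\mathbf{w}^t\cdot\mathbf{x}^t)$ for $1\le i\le y_l^t-1$, $l_i^t=\max(0,1+\mathbf{w}^t\cdot\mathbf{x}^t-\theta_i^t)$ for $y_r^t\le i\le K-1$, and $l_i^t=0$ for $y_l^t\le i\le y_r^t-1$. *)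

From mathcomp Require Import all_boot all_order all_algebra.
Set Implicit Arguments. Unset Strict Implicit. Unset Printing Implicit Defensive.
Import Order.TTheory GRing.Theory Num.Theory.
Local Open Scope ring_scope.

(* Threshold index j : 'I_(K-1) stands for
   the paper's 1-based index i = j+1. Trials are 0-based: trial t (t < T)
   of the paper is trial t+1; w t, theta t are w^{t+1}, theta^{t+1}. *)

Definition dot (R : realFieldType) (n : nat) (u v : 'rV[R]_n) : R :=
  \sum_(i < n) u 0 i * v 0 i.

Definition normsq (R : realFieldType) (n : nat) (u : 'rV[R]_n) : R := dot u u.

Definition pa_feasible (R : realFieldType) (d K : nat)
  (x : 'rV[R]_d) (yl yr : nat) (w : 'rV[R]_d) (th : 'rV[R]_(K - 1)) : Prop :=
  forall j : 'I_(K - 1),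
    ((j.+1 < yl)%N -> dot w x - th 0 j >= 1) /\
    ((yr <= j.+1)%N -> dot w x - th 0 j <= -1).

Definition pa_objective (R : realFieldType) (d K : nat)
  (w : 'rV[R]_d) (th : 'rV[R]_(K - 1)) (w' : 'rV[R]_d) (th' : 'rV[R]_(K - 1)) : R :=
  2^-1 * normsq (w' - w) + 2^-1 * normsq (th' - th).

Definition pa_step (R : realFieldType) (d K : nat)
  (x : 'rV[R]_d) (yl yr : nat) (w : 'rV[R]_d) (th : 'rV[R]_(K - 1))
  (w' : 'rV[R]_d) (th' : 'rV[R]_(K - 1)) : Prop :=
  pa_feasible x yl yr w' th' /\
  forall w'' th'', pa_feasible x yl yr w'' th'' ->
    pa_objective w th w' th' <= pa_objective w th w'' th''.

Definition pa_loss (R : realFieldType) (d K : nat)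
  (x : 'rV[R]_d) (yl yr : nat) (w : 'rV[R]_d) (th : 'rV[R]_(K - 1))
  (j : 'I_(K - 1)) : R :=
  if (j.+1 < yl)%N then Num.max 0 (1 + th 0 j - dot w x)
  else if (yr <= j.+1)%N then Num.max 0 (1 + dot w x - th 0 j)
  else 0.

From mathcomp Require Import all_boot all_order all_algebra ring lra zify.
Import Order.TTheory GRing.Theory Num.Theory.
Set Implicit Arguments. Unset Strict Implicit. Unset Printing Implicit Defensive.
Local Open Scope ring_scope.

(* The PA update is the Euclidean projection of v_t = (w_t, theta_t) onto a convex set
   containing the ideal classifier p = (u, b), hence
   ||v_{t+1} - p||^2 + ||v_{t+1} - v_t||^2 <= ||v_t - p||^2, and telescoping from v_0 = 0
   gives sum_t ||v_{t+1} - v_t||^2 <= ||p||^2.  Conversely, feasibility of v_{t+1} bounds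
   the loss at threshold j by |(w_{t+1} - w_t).x_t - (theta_{t+1} - theta_t)_j|; the loss
   vanishes except at the K - 1 - (yr - yl) <= K - 1 - c active thresholds, so
   Cauchy-Schwarz and Young's inequality bound the squared losses of trial t by
   (1 + R2 (K - c - 1)) ||v_{t+1} - v_t||^2. *)

Section Dot.
Variables (R : realFieldType) (n : nat).
Implicit Types u v z : 'rV[R]_n.

Lemma dotC u v : dot u v = dot v u.
Proof. by apply: eq_bigr => i _; rewrite mulrC. Qed.

Lemma dotDl u v z : dot (u + v) z = dot u z + dot v z.
Proof. by rewrite /dot -big_split; apply: eq_bigr => i _; rewrite mxE mulrDl. Qed.

Lemma dotZl a u z : dot (a *: u) z = a * dot u z.
Proof. by rewrite /dot mulr_sumr; apply: eq_bigr => i _; rewrite mxE mulrA. Qed.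

Lemma dotNl u z : dot (- u) z = - dot u z.
Proof. by rewrite -scaleN1r dotZl mulN1r. Qed.

Lemma dotBl u v z : dot (u - v) z = dot u z - dot v z.
Proof. by rewrite dotDl dotNl. Qed.

Lemma dotDr u v z : dot z (u + v) = dot z u + dot z v.
Proof. by rewrite dotC dotDl !(dotC z). Qed.

Lemma dotZr a u z : dot z (a *: u) = a * dot z u.
Proof. by rewrite dotC dotZl dotC. Qed.

Lemma normsq_ge0 u : 0 <= normsq u.
Proof. by apply: sumr_ge0 => i _; rewrite -expr2 sqr_ge0. Qed.

Lemma normsqD u v : normsq (u + v) = normsq u + 2 * dot u v + normsq v.
Proof. rewrite /normsq !dotDl !dotDr (dotC v u); ring. Qed.

Lemma normsqZ a u : normsq (a *: u) = a ^+ 2 * normsq u.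
Proof. rewrite /normsq dotZl dotZr; ring. Qed.

Lemma normsqN u : normsq (- u) = normsq u.
Proof. by rewrite -scaleN1r normsqZ sqrrN expr1n mul1r. Qed.

Lemma dot_sqr_le u v : dot u v ^+ 2 <= normsq u * normsq v.
Proof.
have normsq_lin a b :
    normsq (a *: u + b *: v) = a ^+ 2 * normsq u + 2 * a * b * dot u v + b ^+ 2 * normsq v.
  rewrite normsqD !normsqZ dotZl dotZr; ring.
(* With U = |u|^2, V = |v|^2, D = u.v, the squared norms of V u - D v, D u - U v and
   u - D v give V (U V - D^2) >= 0, U (U V - D^2) >= 0 and U - 2 D^2 + D^2 V >= 0,
   so no division by U or V is needed. *)
have := normsq_ge0 (normsq v *: u - dot u v *: v).
have := normsq_ge0 (dot u v *: u - normsq u *: v).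
have := normsq_ge0 (u - dot u v *: v).
rewrite -[u in u - _]scale1r -!scaleNr !normsq_lin.
set U := normsq u; set V := normsq v; set D := dot u v => degenerate U_gap V_gap.
rewrite leNgt; apply/negP => gap.
have V0 : V = 0 by apply/eqP; rewrite eq_le normsq_ge0 andbT; nra.
have U0 : U = 0 by apply/eqP; rewrite eq_le normsq_ge0 andbT; nra.
move: gap degenerate; rewrite U0 V0; nra.
Qed.

End Dot.

Lemma normsq_row_mx (R : realFieldType) m n (u : 'rV[R]_m) (v : 'rV[R]_n) :
  normsq (row_mx u v) = normsq u + normsq v.
Proof.
rewrite /normsq /dot big_split_ord /=.
by congr (_ + _); apply: eq_bigr => i _; rewrite (row_mxEl, row_mxEr).
Qed.

Lemma slope_ge0_of_quadratic_ge0 (R : realFieldType) (p q : R) :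
  (forall l, 0 <= l <= 1 -> 0 <= l * (2 * p + l * q)) -> 0 <= p.
Proof.
move=> quad_ge0; rewrite leNgt; apply/negP => p_lt0.
have q_ge0 := normr_ge0 q; have lq_le := ler_norm q.
have q_p_gt0 : 0 < `|q| - p by lra.
(* this l lies in (0, 1] and makes 2 p + l q <= p < 0 *)
pose l := - p / (`|q| - p).
have l_def : l * (`|q| - p) = - p by rewrite mulfVK ?gt_eqF.
have l_gt0 : 0 < l by rewrite divr_gt0 // oppr_gt0.
have l_le1 : l <= 1 by rewrite ler_pdivrMr // mul1r; lra.
have := quad_ge0 l; rewrite ltW //= => /(_ l_le1).
rewrite pmulr_rge0 //; nra.
Qed.

Lemma normsq_closest_on_segment (R : realFieldType) n (z0 z p : 'rV[R]_n) :
  (forall l, 0 <= l <= 1 -> normsq (z - z0) <= normsq (z + l *: (p - z) - z0)) ->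
  normsq (z - p) + normsq (z - z0) <= normsq (z0 - p).
Proof.
move=> z_closest.
have angle_ge0 : 0 <= dot (z - z0) (p - z).
  apply: slope_ge0_of_quadratic_ge0 (normsq (p - z)) _ => l /z_closest.
  rewrite addrAC [normsq (_ + _ *: _)]normsqD normsqZ dotZr; lra.
have -> : z0 - p = - ((z - z0) + (p - z)) by rewrite [(z - z0) + _]addrC addrA subrK opprB.
have -> : z - p = - (p - z) by rewrite opprB.
rewrite !normsqN [normsq (_ + (p - z))]normsqD; lra.
Qed.

Section Sum_bound.
Variables (R : realFieldType) (n : nat) (v z : 'rV[R]_n).

(* Young's inequality (a - s)^2 <= (1 + m r) s^2 + (1 + 1/(m r)) a^2 with a = v.z,
   r = |z|^2 and a^2 <= r |v|^2, multiplied by m to avoid dividing by m r. *)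
Lemma sqr_sub_dot_le (m s : R) : 0 <= m ->
  m * (dot v z - s) ^+ 2 <= m * (1 + m * normsq z) * s ^+ 2 + (1 + m * normsq z) * normsq v.
Proof.
move=> m_ge0.
have := normsq_ge0 (v + (m * s) *: z); rewrite normsqD normsqZ dotZr.
have := mulr_ge0 m_ge0 (normsq_ge0 v); have := mulr_ge0 m_ge0 (normsq_ge0 z).
have := dot_sqr_le v z; nra.
Qed.

Lemma sum_sqr_sub_dot_le (I : finType) (P : pred I) (s : I -> R) :
  \sum_(i in P) (dot v z - s i) ^+ 2
    <= (1 + #|P|%:R * normsq z) * (normsq v + \sum_(i in P) s i ^+ 2).
Proof.
have c_ge0 : 0 <= 1 + #|P|%:R * normsq z by rewrite addr_ge0 ?mulr_ge0 ?normsq_ge0.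
have [P_empty | P_gt0] := posnP #|P|.
  rewrite big_pred0; last exact: card0_eq.
  by rewrite mulr_ge0 // addr_ge0 ?normsq_ge0 ?sumr_ge0 // => i _; apply: sqr_ge0.
rewrite -(ler_pM2l (_ : 0 < #|P|%:R)) ?ltr0n // mulr_sumr.
apply: le_trans (ler_sum _ (fun i _ => sqr_sub_dot_le (s i) (ler0n R #|P|))) _.
rewrite big_split /= sumr_const -mulr_sumr -[_ *+ #|P|]mulr_natl.
by rewrite le_eqVlt; apply/orP; left; apply/eqP; ring.
Qed.

End Sum_bound.

Lemma sqr_max0_le (R : realDomainType) (L D : R) : L <= `|D| -> Num.max 0 L ^+ 2 <= D ^+ 2.
Proof.
move=> L_le; rewrite -[D ^+ 2]real_normK ?num_real // lerXn2r ?nnegrE ?le_max ?lexx //.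
by rewrite ge_max normr_ge0.
Qed.

Lemma card_ord_range n a b : #|[pred j : 'I_n | a <= j < b]%N| = (minn b n - minn a n)%N.
Proof.
rewrite -sum1_card big_mkcond /=.
elim: n => [|n IH]; first by rewrite big_ord0; lia.
by rewrite big_ord_recr /= IH inE /=; case: ifP => /= /andP; lia.
Qed.

Lemma natr_pred_sub_le (R : realDomainType) K c k : (c <= k)%N -> (k < K)%N ->
  (K - 1 - k)%:R <= K%:R - c%:R - 1 :> R.
Proof.
move=> c_le k_lt; have : (K - 1 - k + c + 1 <= K)%N by lia.
by rewrite -(ler_nat R) !natrD; lra.
Qed.

Lemma sum_le_telescope (R : numDomainType) (f g : nat -> R) n :
  (forall t, (t < n)%N -> f t.+1 + g t <= f t) -> \sum_(t < n) g t <= f 0%N - f n.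
Proof.
move=> step; rewrite -(big_mkord xpredT) -opprB -telescope_sumr // -sumrN.
by apply: ler_sum_nat => t /andP[_ /step]; rewrite opprB lerBrDl.
Qed.

Section PA_step.
Variables (R : realFieldType) (d K : nat) (x : 'rV[R]_d) (yl yr : nat).
Implicit Types (w u : 'rV[R]_d) (th b : 'rV[R]_(K - 1)).

Lemma pa_feasible_segment w th u b l : 0 <= l <= 1 ->
  pa_feasible x yl yr w th -> pa_feasible x yl yr u b ->
  pa_feasible x yl yr (w + l *: (u - w)) (th + l *: (b - th)).
Proof.
move=> /andP[l_ge0 l_le1] feas_w feas_u j.
have -> : dot (w + l *: (u - w)) x - (th + l *: (b - th)) 0 j =
    (1 - l) * (dot w x - th 0 j) + l * (dot u x - b 0 j).
  rewrite dotDl dotZl dotBl !mxE; ring.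
have [w_lo w_hi] := feas_w j; have [u_lo u_hi] := feas_u j.
by split=> [/[dup] /w_lo ? /u_lo ? | /[dup] /w_hi ? /u_hi ?]; nra.
Qed.

Lemma pa_objective_row_mx w th w' th' :
  pa_objective w th w' th' = 2^-1 * normsq (row_mx w' th' - row_mx w th).
Proof. by rewrite opp_row_mx add_row_mx normsq_row_mx mulrDr. Qed.

Lemma pa_step_normsq_le w th w' th' u b :
  pa_step x yl yr w th w' th' -> pa_feasible x yl yr u b ->
  normsq (row_mx w' th' - row_mx u b) + normsq (row_mx w' th' - row_mx w th)
    <= normsq (row_mx w th - row_mx u b).
Proof.
move=> [feas' minimal] feas_ub; apply: normsq_closest_on_segment => l l01.
have := minimal _ _ (pa_feasible_segment l01 feas' feas_ub).
rewrite !pa_objective_row_mx ler_pM2l ?invr_gt0 ?ltr0n //.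
by rewrite !opp_row_mx !add_row_mx scale_row_mx !add_row_mx.
Qed.

End PA_step.

Lemma pa_movement_le (R : realFieldType) d K T (x : nat -> 'rV[R]_d) (yl yr : nat -> nat)
    (w : nat -> 'rV[R]_d) (th : nat -> 'rV[R]_(K - 1))
    (u : 'rV[R]_d) (b : 'rV[R]_(K - 1)) :
  w 0%N = 0 -> th 0%N = 0 ->
  (forall t, (t < T)%N -> pa_step (x t) (yl t) (yr t) (w t) (th t) (w t.+1) (th t.+1)) ->
  (forall t, (t < T)%N -> pa_feasible (x t) (yl t) (yr t) u b) ->
  \sum_(t < T) normsq (row_mx (w t.+1) (th t.+1) - row_mx (w t) (th t))
    <= normsq u + normsq b.
Proof.
move=> w0 th0 steps ideal.
pose dist t := normsq (row_mx (w t) (th t) - row_mx u b).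
pose jump t := normsq (row_mx (w t.+1) (th t.+1) - row_mx (w t) (th t)).
apply: le_trans (sum_le_telescope (f := dist) (g := jump) _) _ => [t t_lt | ].
  exact: pa_step_normsq_le (steps t t_lt) (ideal t t_lt).
by rewrite /dist w0 th0 row_mx0 sub0r normsqN normsq_row_mx gerBl normsq_ge0.
Qed.

Definition pa_active (yl yr i : nat) : bool := (i < yl)%N || (yr <= i)%N.

Lemma card_pa_active K yl yr : (1 <= yl)%N -> (yr <= K)%N ->
  #|[pred j : 'I_(K - 1) | pa_active yl yr j.+1]| = (K - 1 - (yr - yl))%N.
Proof.
move=> yl_ge1 yr_leK.
have card_inactive : #|[predC [pred j : 'I_(K - 1) | pa_active yl yr j.+1]]| = (yr - yl)%N.
  rewrite (eq_card (B := [pred j : 'I_(K - 1) | yl - 1 <= j < yr - 1]%N)).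
    by rewrite card_ord_range; lia.
  by move=> j; rewrite !inE /pa_active; lia.
have := cardC [pred j : 'I_(K - 1) | pa_active yl yr j.+1].
by rewrite card_ord card_inactive; apply: canRL (addnK _).
Qed.

Section Loss.
Variables (R : realFieldType) (d K : nat) (x : 'rV[R]_d) (yl yr : nat).
Implicit Types (w : 'rV[R]_d) (th : 'rV[R]_(K - 1)).

Lemma pa_loss_inactive w th (j : 'I_(K - 1)) :
  ~~ pa_active yl yr j.+1 -> pa_loss x yl yr w th j = 0.
Proof. by rewrite /pa_loss /pa_active negb_or => /andP[/negbTE -> /negbTE ->]. Qed.

Lemma pa_loss_sqr_le w th w' th' (j : 'I_(K - 1)) : pa_feasible x yl yr w' th' ->
  pa_loss x yl yr w th j ^+ 2 <= (dot (w' - w) x - (th' 0 j - th 0 j)) ^+ 2.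
Proof.
move=> /(_ j) [feas_lo feas_hi]; rewrite /pa_loss dotBl.
case: ifP => [/feas_lo | _]; first by move=> ?; apply: sqr_max0_le; rewrite ler_normr; lra.
case: ifP => [/feas_hi | _]; first by move=> ?; apply: sqr_max0_le; rewrite ler_normr; lra.
by rewrite expr0n sqr_ge0.
Qed.

Lemma pa_loss_sum_le w th w' th' :
  (1 <= yl)%N -> (yr <= K)%N -> pa_feasible x yl yr w' th' ->
  \sum_(j < K - 1) pa_loss x yl yr w th j ^+ 2
    <= (1 + (K - 1 - (yr - yl))%:R * normsq x) * normsq (row_mx w' th' - row_mx w th).
Proof.
move=> yl_ge1 yr_leK feas'.
set P := [pred j : 'I_(K - 1) | pa_active yl yr j.+1].
rewrite opp_row_mx add_row_mx normsq_row_mx -(card_pa_active yl_ge1 yr_leK) -/P.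
rewrite (bigID P) /= [X in _ + X]big1 ?addr0 => [|j /pa_loss_inactive ->]; last first.
  by rewrite expr0n.
apply: le_trans (ler_sum _ (fun j _ => pa_loss_sqr_le w th j feas')) _.
apply: le_trans (sum_sqr_sub_dot_le _ _ _ _) _.
rewrite ler_wpM2l ?lerD2l ?addr_ge0 ?mulr_ge0 ?normsq_ge0 //.
rewrite /normsq /dot [X in _ <= X](bigID P) /= -[X in X <= _]addr0 lerD //.
  by apply: ler_sum => j _; rewrite !mxE expr2.
by apply: sumr_ge0 => j _; rewrite -expr2 sqr_ge0.
Qed.

End Loss.

Theorem corollary1 (R : realFieldType) (d K T : nat)
  (x : nat -> 'rV[R]_d) (yl yr : nat -> nat)
  (w : nat -> 'rV[R]_d) (th : nat -> 'rV[R]_(K - 1))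
  (u : 'rV[R]_d) (b : 'rV[R]_(K - 1)) :
  (forall t, (t < T)%N -> [/\ (1 <= yl t)%N, (yl t <= yr t)%N & (yr t <= K)%N]) ->
  w 0%N = 0 -> th 0%N = 0 ->
  (forall t, (t < T)%N -> pa_step (x t) (yl t) (yr t) (w t) (th t) (w t.+1) (th t.+1)) ->
  (forall t, (t < T)%N -> forall j : 'I_(K - 1),
      ((j.+1 < yl t)%N -> dot u (x t) - b 0 j >= 1) /\
      ((yr t <= j.+1)%N -> dot u (x t) - b 0 j <= -1)) ->
  let c : nat := \big[minn/K]_(t < T) (yr t - yl t)%N in
  let R2 : R := \big[Num.max/0]_(t < T) normsq (x t) in
  \sum_(t < T) \sum_(j < K - 1) (pa_loss (x t) (yl t) (yr t) (w t) (th t) j) ^+ 2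
    <= (normsq u + normsq b) * (1 + R2 * (K%:R - c%:R - 1)).
Proof.
move=> labels w0 th0 steps ideal /=.
have [-> | T_gt0] := posnP T.
  by rewrite !big_ord0 mul0r addr0 mulr1 addr_ge0 ?normsq_ge0.
set c := \big[minn/K]_(t < T) _; set R2 := \big[Num.max/0]_(t < T) _.
have c_le (t : 'I_T) : (c <= yr t - yl t)%N.
  exact: (bigmin_le K t (fun t : 'I_T => (yr t - yl t)%N)).
have gap_lt (t : 'I_T) : (yr t - yl t < K)%N by have [] := labels t (ltn_ord t); lia.
have M_ge0 : 0 <= K%:R - c%:R - 1 :> R.
  exact: le_trans (ler0n R _) (natr_pred_sub_le R (c_le (Ordinal T_gt0)) (gap_lt _)).
have step_le (t : 'I_T) :
    \sum_(j < K - 1) pa_loss (x t) (yl t) (yr t) (w t) (th t) j ^+ 2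
      <= (1 + R2 * (K%:R - c%:R - 1))
         * normsq (row_mx (w t.+1) (th t.+1) - row_mx (w t) (th t)).
  have [yl_ge1 _ yr_leK] := labels t (ltn_ord t).
  have [feas' _] := steps t (ltn_ord t).
  apply: le_trans (pa_loss_sum_le (w t) (th t) yl_ge1 yr_leK feas') _.
  rewrite ler_wpM2r ?normsq_ge0 // lerD2l mulrC ler_pM ?normsq_ge0 //.
    exact: (le_bigmax 0 (fun t : 'I_T => normsq (x t)) t).
  exact: natr_pred_sub_le.
apply: le_trans (ler_sum _ (fun t _ => step_le t)) _.
rewrite -mulr_sumr mulrC ler_wpM2r ?addr_ge0 ?mulr_ge0 ?bigmax_ge_id //.
exact: pa_movement_le w0 th0 steps ideal.
Qed.
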